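(* Let $k$ be a field of characteristic different from $2$, $d\in k$, and $E\subset\mathbb{P}^3$ the elliptic curve $X_0^2+dX_3^2=X_1^2+X_2^2$, $X_0X_3=X_1X_2$, with identity $(1:0:1:0)$. Let $\mathscr{K}_2=E^2/\{\pm1\}$ be modelled in $\mathbb{P}^3\times\mathbb{P}^1$, with coordinates $\big((U_0:U_1:U_2:U_3),(Z_0:Z_1)\big)$, as the variety cut out by $U_0U_3=U_1U_2$ and $(U_0^2-U_1^2-U_2^2+U_3^2)Z_0^2=(U_0^2-dU_1^2-dU_2^2+d^2U_3^2)Z_1^2$, via the projection $(P,Q)\mapsto\big((X_0Y_0:X_2Y_0:X_0Y_2:X_2Y_2),(X_0Y_0:X_1Y_1)\big)$ for $(P,Q)=\big((X_0:X_1:X_2:X_3),(Y_0:Y_1:Y_2:Y_3)\big)$. Let $\tau:\mathscr{K}_2\to\mathscr{K}_2$ be the endomorphism induced by $\tau(P,Q)=(P+Q,Q)$ on $E^2$. Then $$\pi_1\circ\tau=(U_0Z_0-dU_3Z_1\;:\;-U_0Z_1+U_3Z_0),\qquad \pi_2\circ\tau=(U_0:U_2)=(U_1:U_3),$$ and $\pi_3\circ\tau$ is given by either of the equivalent expressions $$\big((U_0^2-dU_3^2)Z_0\;:\;(U_0U_1-U_2U_3)Z_0+(U_0U_2-dU_1U_3)Z_1\big),$$ $$\big(-(U_0U_2-U_1U_3)Z_0+(U_0U_1-dU_2U_3)Z_1\;:\;(U_1^2-U_2^2)Z_1\big).$$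
   Context: $\mathscr{K}_1=E/\{\pm1\}\cong\mathbb{P}^1$ via $(X_0:X_1:X_2:X_3)\mapsto(X_0:X_2)$; $-1$ acts diagonally on $E^2$. The projections $\pi_1,\pi_2:\mathscr{K}_2\to\mathscr{K}_1$ and $\pi_3:\mathscr{K}_2\to\mathbb{P}^1$ are $\pi_1=(U_0:U_1)=(U_2:U_3)$, $\pi_2=(U_0:U_2)=(U_1:U_3)$, $\pi_3=(Z_0:Z_1)$. ''Given by'' a polynomial expression means the morphism equals the displayed tuple wherever its components do not all vanish on $\mathscr{K}_2$. *)

From HB Require Import structures.
From mathcomp Require Import all_boot all_order all_algebra.
Set Implicit Arguments. Unset Strict Implicit. Unset Printing Implicit Defensive.
Import Order.TTheory GRing.Theory Num.Theory.
Local Open Scope ring_scope.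

(* Homogeneous coordinates of a point of P^3 (resp. P^1) over a field k. *)
Record pt4 (k : Type) := Pt4 { c0 : k; c1 : k; c2 : k; c3 : k }.

(* propositional list membership (pt4 k is not an eqType) *)
Definition inL {T : Type} (x : T) (s : seq T) : Prop :=
  foldr (fun y P => y = x \/ P) False s.

Section Defs.
Variable k : fieldType.

Definition nz4 (X : pt4 k) : Prop :=
  ~ [/\ c0 X = 0, c1 X = 0, c2 X = 0 & c3 X = 0].
Definition nz2 (a : k * k) : Prop := ~ (a.1 = 0 /\ a.2 = 0).

(* proportionality of two vectors (equality in P^1 / P^3 when both nonzero) *)
Definition prop2 (a b : k * k) : Prop := a.1 * b.2 = a.2 * b.1.
Definition prop4 (U V : pt4 k) : Prop :=
  [/\ c0 U * c1 V = c1 U * c0 V, c0 U * c2 V = c2 U * c0 V,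
      c0 U * c3 V = c3 U * c0 V, c1 U * c2 V = c2 U * c1 V
    & c1 U * c3 V = c3 U * c1 V /\ c2 U * c3 V = c3 U * c2 V].

Definition onE (d : k) (X : pt4 k) : Prop :=
  [/\ nz4 X,
      c0 X ^+ 2 + d * c3 X ^+ 2 = c1 X ^+ 2 + c2 X ^+ 2
    & c0 X * c3 X = c1 X * c2 X].

(* E sits in the Segre quadric P^1 x P^1 via X = (a0 b0 : a1 b0 : a0 b1 : a1 b1),
   where (a0 : a1) = (X0 : X1) = (X2 : X3) and (b0 : b1) = (X0 : X2) = (X1 : X3)
   (affinely x = X1/X0, y = X2/X0, the Edwards curve x^2+y^2 = 1 + d x^2 y^2
   with identity (0,1) = (1:0:1:0)).  "X has first factor a" / "second factor b": *)
Definition fac1_is (X : pt4 k) (a : k * k) : Prop :=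
  c0 X * a.2 = c1 X * a.1 /\ c2 X * a.2 = c3 X * a.1.
Definition fac2_is (X : pt4 k) (b : k * k) : Prop :=
  c0 X * b.2 = c2 X * b.1 /\ c1 X * b.2 = c3 X * b.1.

(* Group law on E (identity (1:0:1:0)): the Edwards addition laws, written as
   the two (complete) systems of bidegree-(1,1) forms for each P^1 factor. *)
Definition addA (d : k) (X Y : pt4 k) : seq (k * k) :=
  [:: (c0 X * c0 Y + d * c3 X * c3 Y, c1 X * c2 Y + c2 X * c1 Y);
      (c1 X * c1 Y + c2 X * c2 Y, c0 X * c3 Y + c3 X * c0 Y)].
Definition addB (d : k) (X Y : pt4 k) : seq (k * k) :=
  [:: (c0 X * c0 Y - d * c3 X * c3 Y, c2 X * c2 Y - c1 X * c1 Y);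
      (c1 X * c2 Y - c2 X * c1 Y, c3 X * c0 Y - c0 X * c3 Y)].

Definition is_sum (d : k) (P Q R : pt4 k) : Prop :=
  [/\ onE d R,
      (forall a, inL a (addA d P Q) -> nz2 a -> fac1_is R a)
    & (forall b, inL b (addB d P Q) -> nz2 b -> fac2_is R b)].

(* The projection E^2 -> K_2 subset P^3 x P^1,
   (P,Q) |-> ((X0Y0 : X2Y0 : X0Y2 : X2Y2), (X0Y0 : X1Y1)),
   extended by the equivalent expressions obtained from (X0:X2) = (X1:X3)
   and X1/X0 = X3/X2 on E.  ((U,Z) is the image of (P,Q); the map is
   defined at (P,Q) iff one of the Z-expressions is nonzero.) *)
Definition segre (a b : k * k) : pt4 k :=
  Pt4 (a.1 * b.1) (a.2 * b.1) (a.1 * b.2) (a.2 * b.2).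
Definition kumU (X Y : pt4 k) : seq (pt4 k) :=
  [seq segre a b | a <- [:: (c0 X, c2 X); (c1 X, c3 X)],
                   b <- [:: (c0 Y, c2 Y); (c1 Y, c3 Y)]].
Definition kumZ (X Y : pt4 k) : seq (k * k) :=
  [:: (c0 X * c0 Y, c1 X * c1 Y); (c0 X * c2 Y, c1 X * c3 Y);
      (c2 X * c0 Y, c3 X * c1 Y); (c2 X * c2 Y, c3 X * c3 Y)].

Definition kummer_img (X Y : pt4 k) (U : pt4 k) (Z : k * k) : Prop :=
  [/\ nz4 U, nz2 Z,
      (forall V, inL V (kumU X Y) -> nz4 V -> prop4 U V),
      (exists2 z, inL z (kumZ X Y) & nz2 z)
    & (forall z, inL z (kumZ X Y) -> nz2 z -> prop2 Z z)].

Definition pi1_is (U : pt4 k) (t : k * k) : Prop :=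
  prop2 (c0 U, c1 U) t /\ prop2 (c2 U, c3 U) t.
Definition pi2_is (U : pt4 k) (t : k * k) : Prop :=
  prop2 (c0 U, c2 U) t /\ prop2 (c1 U, c3 U) t.
Definition pi3_is (Z : k * k) (t : k * k) : Prop := prop2 Z t.

End Defs.

(* Write each point of E as [segre a b], where (a0 : a1) = (X0 : X1) and
   (b0 : b1) = (X0 : X2) are its two P^1-factors.  For P = segre a b and
   Q = segre e g, the image of (P, Q) in K_2 is U = segre b g and
   Z = (a0 e0 : a1 e1) up to scalars; likewise tau (P, Q) maps to U' = segre s g
   and Z' = (r0 e0 : r1 e1), where P + Q = segre r s.  So pi_2 o tau = (g0 : g1)
   is read off U, and pi_1 o tau = (s0 : s1) is given by the first row of the
   addition law for the second factor, which is bihomogeneous in U and Z.  For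
   pi_3 o tau, the first factor r of P + Q is proportional to every nonzero row
   of the addition law for the first factor; scaling by (e0 : e1) and reducing
   modulo the two curve equations turns each row into the stated expressions.
   When both rows vanish these expressions vanish as well, so each nonzero one
   determines Z'. *)

From Pilot Require Import Defs.
From HB Require Import structures.
From mathcomp Require Import all_boot all_order all_algebra.
From mathcomp Require Import ring.
Set Implicit Arguments.
Unset Strict Implicit.
Unset Printing Implicit Defensive.
Import Order.TTheory GRing.Theory Num.Theory.
Local Open Scope ring_scope.

Section Projective.
Variable k : fieldType.
Implicit Types (x y c l : k) (z t w : k * k) (U V W : pt4 k).

Definition scale2 c z : k * k := (c * z.1, c * z.2).
Definition scale4 c W : pt4 k := Pt4 (c * c0 W) (c * c1 W) (c * c2 W) (c * c3 W).

Lemma nz2_cases x y : nz2 (x, y) -> x != 0 \/ (x = 0 /\ y != 0).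
Proof.
move=> nz; have [x0|] := eqVneq x 0; last by left.
by right; split => //; apply/eqP => y0; apply: nz.
Qed.

Lemma nz2_dec z : nz2 z \/ z = (0, 0).
Proof.
case: z => x y; have [-> | nx] := eqVneq x 0.
  have [-> | ny] := eqVneq y 0; first by right.
  by left; case=> _ /= y0; rewrite y0 eqxx in ny.
by left; case=> /= x0; rewrite x0 eqxx in nx.
Qed.

Lemma nz2_inL z : nz2 z -> exists2 x, inL x [:: z.1; z.2] & x != 0.
Proof.
case: z => x y /nz2_cases [nx | [_ ny]]; first by exists x; [left |].
by exists y; [right; left |].
Qed.

Lemma nz2_scale2 c z : nz2 (scale2 c z) -> nz2 z.
Proof. by move=> nz [z1 z2]; apply: nz; rewrite /= z1 z2 mulr0. Qed.

Lemma nz4_scale4 c W : c != 0 -> nz4 W -> nz4 (scale4 c W).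
Proof.
by move=> nc nW [/= h0 h1 h2 h3]; apply: nW; split; apply: (mulfI nc); rewrite mulr0.
Qed.

Lemma nz4_segre z w : nz2 z -> nz2 w -> nz4 (segre z w).
Proof.
case: z w => [x0 x1] [y0 y1] nx ny [/= h0 h1 h2 h3]; apply: ny.
by case: (nz2_cases nx) => [n0 | [_ n1]]; split;
  [apply: (mulfI n0) | apply: (mulfI n0) | apply: (mulfI n1) | apply: (mulfI n1)];
  rewrite mulr0.
Qed.

Lemma prop2_scale2 c c' z t : prop2 z t -> prop2 (scale2 c z) (scale2 c' t).
Proof. by rewrite /prop2 /= => h; rewrite mulrACA h; ring. Qed.

Lemma prop2_scale2_eq c z t w : prop2 z t -> w = scale2 c z -> prop2 w t.
Proof. by move=> h ->; rewrite /prop2 /= -!mulrA h. Qed.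

Lemma prop2_scale2r c z t : prop2 z t -> prop2 z (scale2 c t).
Proof. by rewrite /prop2 /= => h; rewrite mulrCA h mulrCA. Qed.

Lemma prop2_trans z t w : nz2 t -> prop2 z t -> prop2 t w -> prop2 z w.
Proof.
case: z t w => [x0 x1] [y0 y1] [z0 z1]; rewrite /prop2 /= => nt h1 h2.
have [n0 | [y00 n1]] := nz2_cases nt.
  by apply: (mulfI n0); rewrite mulrCA h2 mulrA h1; ring.
move: h1 h2; rewrite y00 mulr0 mul0r => /eqP; rewrite mulf_eq0 (negbTE n1) orbF.
by move=> /eqP -> /esym/eqP; rewrite mulf_eq0 (negbTE n1) => /eqP ->; rewrite !mul0r mulr0.
Qed.

Lemma eq_div_mulr x y u v : x != 0 -> u * y = v * x -> v = u / x * y.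
Proof. by move=> nx h; rewrite mulrAC h mulfK. Qed.

Lemma prop2_scaled z t : nz2 t -> prop2 z t -> exists c, z = scale2 c t.
Proof.
case: z t => [x0 x1] [y0 y1]; rewrite /prop2 /= => nt h.
have [n0 | [_ n1]] := nz2_cases nt.
  by exists (x0 / y0); congr pair; [rewrite mulfVK | apply: eq_div_mulr h].
by exists (x1 / y1); congr pair; [apply: eq_div_mulr (esym h) | rewrite mulfVK].
Qed.

Lemma prop4_scaled U V : nz4 V -> prop4 U V -> exists c, U = scale4 c V.
Proof.
case: U V => [u0 u1 u2 u3] [v0 v1 v2 v3].
rewrite /nz4 /prop4 /scale4 /= => nV [h01 h02 h03 h12 [h13 h23]].
have [z0 | n0] := eqVneq v0 0; last first.
  by exists (u0 / v0); congr Pt4; apply: eq_div_mulr n0 _ => //; symmetry.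
have [z1 | n1] := eqVneq v1 0; last first.
  by exists (u1 / v1); congr Pt4; apply: eq_div_mulr n1 _ => //; symmetry.
have [z2 | n2] := eqVneq v2 0; last first.
  by exists (u2 / v2); congr Pt4; apply: eq_div_mulr n2 _ => //; symmetry.
have [z3 | n3] := eqVneq v3 0; last first.
  by exists (u3 / v3); congr Pt4; apply: eq_div_mulr n3 _ => //; symmetry.
by case: nV.
Qed.

Lemma scale2M c c' z : scale2 c (scale2 c' z) = scale2 (c * c') z.
Proof. by rewrite /scale2 /= !mulrA. Qed.

Lemma scale4M c c' W : scale4 c (scale4 c' W) = scale4 (c * c') W.
Proof. by rewrite /scale4 /= !mulrA. Qed.

Lemma nz2_exists_row (A1 A2 F : k * k) :
  ([:: A1; A2] = [:: (0, 0); (0, 0)] -> F = (0, 0)) -> nz2 F ->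
  exists2 A, inL A [:: A1; A2] & nz2 A.
Proof.
move=> hF nF; have [nA1 | A10] := nz2_dec A1; first by exists A1; [left |].
have [nA2 | A20] := nz2_dec A2; first by exists A2; [right; left |].
by case: nF; rewrite hF ?A10 ?A20.
Qed.

End Projective.

Lemma inL_map (T S : Type) (f : T -> S) s y :
  inL y [seq f x | x <- s] -> exists x, y = f x.
Proof. by elim: s => //= x s IH [<- | /IH]; [exists x |]. Qed.

Lemma inL_map_f (T S : Type) (f : T -> S) s x : inL x s -> inL (f x) (map f s).
Proof. by elim: s => //= y s IH [-> | /IH]; [left | right]. Qed.

Lemma lincomb2_eq0 (R : pzRingType) (p q x c c' : R) :
  p = 0 -> q = 0 -> x = c * p + c' * q -> x = 0.
Proof. by move=> -> -> ->; rewrite !mulr0 addr0. Qed.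

Lemma lincomb3_eq0 (R : pzRingType) (p q r x c c' c'' : R) :
  p = 0 -> q = 0 -> r = 0 -> x = c * p + c' * q + c'' * r -> x = 0.
Proof. by move=> -> -> -> ->; rewrite !mulr0 !addr0. Qed.

Section EdwardsSegre.
Variables (k : fieldType) (d : k).
Implicit Types (a b e g r s t : k * k) (X Y U V W : pt4 k) (l n : k).

Definition edwards_form X : k :=
  c0 X ^+ 2 + d * c3 X ^+ 2 - (c1 X ^+ 2 + c2 X ^+ 2).

Lemma onE_edwards_form X : onE d X -> edwards_form X = 0.
Proof. by case=> _ h _; rewrite /edwards_form h subrr. Qed.

Lemma onE_segre X : onE d X -> exists a b, [/\ nz2 a, nz2 b & X = segre a b].
Proof.
case: X => x0 x1 x2 x3 [nX _ /= h]; rewrite /segre /=.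
have nz1 y : nz2 (1, y) by case=> /eqP; rewrite oner_eq0.
have nz1' y : nz2 (y, 1) by case=> _ /eqP; rewrite oner_eq0.
have [z0 | n0] := eqVneq x0 0; last first.
  exists (x0, x1), (1, x2 / x0); split => //; first by case=> /eqP; rewrite (negbTE n0).
  congr Pt4; rewrite /= ?mulr1 //; first by field.
  by apply: (mulfI n0); rewrite h; field.
have [z1 | n1] := eqVneq x1 0; last first.
  exists (x0, x1), (1, x3 / x1); split => //; first by case=> _ /eqP; rewrite (negbTE n1).
  congr Pt4; rewrite /= ?mulr1 //; last by field.
  by apply: (mulfI n1); rewrite -h; field.
have [z2 | n2] := eqVneq x2 0; last first.
  exists (x2, x3), (x0 / x2, 1); split => //; first by case=> /eqP; rewrite (negbTE n2).
  congr Pt4; rewrite /= ?mulr1 //; first by field.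
  by apply: (mulfI n2); rewrite mulrC -h; field.
have [z3 | n3] := eqVneq x3 0; last first.
  exists (x2, x3), (x1 / x3, 1); split => //; first by case=> _ /eqP; rewrite (negbTE n3).
  congr Pt4; rewrite /= ?mulr1 //; last by field.
  by apply: (mulfI n3); rewrite mulrC h; field.
by case: nX.
Qed.

Lemma kumU_segre a b e g :
  kumU (segre a b) (segre e g) =
  [seq scale4 c (segre b g) | c <- [:: a.1 * e.1; a.1 * e.2; a.2 * e.1; a.2 * e.2]].
Proof. by rewrite /kumU /scale4 /segre /=; congr [:: _; _; _; _]; congr Pt4; ring. Qed.

Lemma kumZ_segre a b e g :
  kumZ (segre a b) (segre e g) =
  [seq scale2 c (a.1 * e.1, a.2 * e.2) | c <- [:: b.1 * g.1; b.1 * g.2; b.2 * g.1; b.2 * g.2]].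
Proof. by rewrite /kumZ /scale2 /segre /=; congr [:: _; _; _; _]; congr pair; ring. Qed.

Lemma kummer_img_segre a b e g U Z :
  nz2 a -> nz2 b -> nz2 e -> nz2 g -> kummer_img (segre a b) (segre e g) U Z ->
  (exists l, U = scale4 l (segre b g)) /\ (exists n, Z = scale2 n (a.1 * e.1, a.2 * e.2)).
Proof.
move=> na nb ne ng [_ _ hU [z hz nz] hZ]; split.
  have [x hx nx] := nz2_inL na; have [y hy ny] := nz2_inL ne.
  set V := scale4 (x * y) (segre b g).
  have nV : nz4 V by apply: nz4_scale4; [rewrite mulf_neq0 | apply: nz4_segre].
  have inV : inL V (kumU (segre a b) (segre e g)).
    have xy : inL (x * y) [:: a.1 * e.1; a.1 * e.2; a.2 * e.1; a.2 * e.2].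
      by case: hx => [<- | [<- | []]]; case: hy => [<- | [<- | []]]; do ?[by left | right].
    by rewrite kumU_segre; exact (inL_map_f (fun c => scale4 c (segre b g)) xy).
  by have [l ->] := prop4_scaled nV (hU V inV nV); exists (l * (x * y)); rewrite scale4M.
move: hz hZ; rewrite kumZ_segre => hz hZ; have [c ez] := inL_map hz.
by have [n ->] := prop2_scaled nz (hZ z hz nz); exists (n * c); rewrite ez scale2M.
Qed.

(* Unqualified, [addA] would resolve to a lemma of MathComp's fraction field. *)
Lemma is_sum_fac1 X Y r s A :
  nz2 s -> is_sum d X Y (segre r s) -> inL A (Defs.addA d X Y) -> nz2 A -> prop2 r A.
Proof.
case: r s => r0 r1 [s0 s1] ns [_ hA _] inA nA; case: (hA A inA nA) => /= h0 h2.
rewrite /prop2 /=; have [n0 | [_ n1]] := nz2_cases ns.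
  by apply: (mulIf n0); rewrite mulrAC h0 mulrAC.
by apply: (mulIf n1); rewrite mulrAC h2 mulrAC.
Qed.

Lemma is_sum_fac2 X Y r s B :
  nz2 r -> is_sum d X Y (segre r s) -> inL B (addB d X Y) -> nz2 B -> prop2 s B.
Proof.
case: r s => r0 r1 [s0 s1] nr [_ _ hB] inB nB; case: (hB B inB nB) => /= h0 h1.
rewrite /prop2 /=; have [n0 | [_ n1]] := nz2_cases nr.
  by apply: (mulfI n0); rewrite !mulrA.
by apply: (mulfI n1); rewrite !mulrA.
Qed.

Lemma is_sum_prop2 X Y r s e F :
  nz2 s -> is_sum d X Y (segre r s) ->
  (forall A, inL A (Defs.addA d X Y) -> prop2 A (e.2 * F.1, e.1 * F.2)) ->
  (Defs.addA d X Y = [:: (0, 0); (0, 0)] -> F = (0, 0)) ->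
  nz2 F -> prop2 (r.1 * e.1, r.2 * e.2) F.
Proof.
move=> ns hR cross van nF; have [A inA nA] := nz2_exists_row van nF.
have := prop2_trans nA (is_sum_fac1 ns hR inA nA) (cross A inA).
by rewrite /prop2 /= -!mulrA.
Qed.

End EdwardsSegre.

Section TauFormulas.
Variables (k : fieldType) (d : k).
Implicit Types (s g t Z : k * k) (U : pt4 k) (l n : k).

Definition tau_pi1 U Z : k * k :=
  (c0 U * Z.1 - d * c3 U * Z.2, - c0 U * Z.2 + c3 U * Z.1).

Definition tau_pi3 U Z : k * k :=
  ((c0 U ^+ 2 - d * c3 U ^+ 2) * Z.1,
   (c0 U * c1 U - c2 U * c3 U) * Z.1 + (c0 U * c2 U - d * c1 U * c3 U) * Z.2).

Definition tau_pi3' U Z : k * k :=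
  (- (c0 U * c2 U - c1 U * c3 U) * Z.1 + (c0 U * c1 U - d * c2 U * c3 U) * Z.2,
   (c1 U ^+ 2 - c2 U ^+ 2) * Z.2).

Lemma tau_pi1_scale l n U Z :
  tau_pi1 (scale4 l U) (scale2 n Z) = scale2 (l * n) (tau_pi1 U Z).
Proof. by rewrite /tau_pi1 /scale2 /=; congr pair; ring. Qed.

Lemma tau_pi3_scale l n U Z :
  tau_pi3 (scale4 l U) (scale2 n Z) = scale2 (l ^+ 2 * n) (tau_pi3 U Z).
Proof. by rewrite /tau_pi3 /scale2 /=; congr pair; ring. Qed.

Lemma tau_pi3'_scale l n U Z :
  tau_pi3' (scale4 l U) (scale2 n Z) = scale2 (l ^+ 2 * n) (tau_pi3' U Z).
Proof. by rewrite /tau_pi3' /scale2 /=; congr pair; ring. Qed.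

Lemma pi1_is_segre l s g t : prop2 s t -> pi1_is (scale4 l (segre s g)) t.
Proof.
move=> h; split;
  [apply: (prop2_scale2_eq (c := l * g.1) h) | apply: (prop2_scale2_eq (c := l * g.2) h)];
  by rewrite /scale2 /=; congr pair; ring.
Qed.

Lemma pi2_is_segre l s g t : prop2 g t -> pi2_is (scale4 l (segre s g)) t.
Proof.
move=> h; split;
  [apply: (prop2_scale2_eq (c := l * s.1) h) | apply: (prop2_scale2_eq (c := l * s.2) h)];
  by rewrite /scale2 /=; congr pair; ring.
Qed.

End TauFormulas.

Section AdditionLawCertificates.
Variables (k : fieldType) (d a0 a1 b0 b1 e0 e1 g0 g1 : k).
Local Notation P := (segre (a0, a1) (b0, b1)).
Local Notation Q := (segre (e0, e1) (g0, g1)).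
Local Notation U := (segre (b0, b1) (g0, g1)).
Local Notation Z := (a0 * e0, a1 * e1).
Hypotheses (onP : edwards_form d P = 0) (onQ : edwards_form d Q = 0).

Lemma tau_pi1_addB : tau_pi1 d U Z = head (0, 0) (addB d P Q).
Proof. by rewrite /tau_pi1 /=; congr pair; ring. Qed.

(* Cofactors of the two curve equations, found by computer algebra. *)
Lemma addA_tau_pi3 A :
  inL A (Defs.addA d P Q) -> prop2 A (e1 * (tau_pi3 d U Z).1, e0 * (tau_pi3 d U Z).2).
Proof.
rewrite /prop2 => -[<- | [<- | []]]; apply/eqP; rewrite -subr_eq0; apply/eqP.
  apply: (lincomb2_eq0
    (c := b1 * e0 * g0 * ((e0 * g0) ^+ 2 - (e1 * g0) ^+ 2 - (e0 * g1) ^+ 2))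
    (c' := b1 * e0 * g0 * ((a1 * b0) ^+ 2 + (a0 * b1) ^+ 2 - d * (a1 * b1) ^+ 2))
    onP onQ).
  by rewrite /edwards_form /=; ring.
apply: (lincomb2_eq0 (c := - (b0 * e0 * e1 ^+ 2 * g0 ^+ 2 * g1))
                     (c' := a0 ^+ 2 * b0 * b1 ^+ 2 * e0 * g1) onP onQ).
by rewrite /edwards_form /=; ring.
Qed.

Lemma addA_tau_pi3' A :
  inL A (Defs.addA d P Q) -> prop2 A (e1 * (tau_pi3' d U Z).1, e0 * (tau_pi3' d U Z).2).
Proof.
rewrite /prop2 => -[<- | [<- | []]]; apply/eqP; rewrite -subr_eq0; apply/eqP.
  apply: (lincomb2_eq0 (c := b1 * e0 * e1 ^+ 2 * g0 ^+ 2 * g1)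
                       (c' := a0 * a1 * b0 * b1 ^+ 2 * e1 * g0) onP onQ).
  by rewrite /edwards_form /=; ring.
apply: (lincomb2_eq0 (c := b0 * e0 * e1 ^+ 2 * g0 * g1 ^+ 2)
                     (c' := a0 * a1 * b0 ^+ 2 * b1 * e1 * g1) onP onQ).
by rewrite /edwards_form /=; ring.
Qed.

Lemma tau_pi3_rows_eq0 :
  Defs.addA d P Q = [:: (0, 0); (0, 0)] -> tau_pi3 d U Z = (0, 0).
Proof.
move=> [A0 A1 B0 B1]; congr pair.
  apply: (lincomb2_eq0 (c := b0 * g0) (c' := - (d * b1 * g1)) A0 B0).
  by rewrite /tau_pi3 /=; ring.
have [e00 | ne0] := eqVneq e0 0.
  apply: (lincomb3_eq0 (c := b0 * g1) (c' := - (b1 * g0))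
                       (c'' := 2 * a0 * b0 * b1 * (g0 ^+ 2 - g1 ^+ 2)) B0 A0 e00).
  by rewrite /tau_pi3 /=; ring.
apply: (mulIf ne0); rewrite mul0r.
apply: (lincomb3_eq0 (c := b0 * e1 * g0) (c' := - (d * b1 * e1 * g1))
                     (c'' := a0 * b0 * b1) A1 B1 onQ).
by rewrite /edwards_form /tau_pi3 /=; ring.
Qed.

Lemma edwards_e1g0_neq0 :
  d != 0 -> nz2 (e0, e1) -> nz2 (g0, g1) -> e0 = 0 -> e1 * g0 != 0.
Proof.
move=> hd ne ng e00; have ne1 : e1 != 0 by apply/eqP => e10; apply: ne.
rewrite mulf_neq0 //; apply/eqP => g00; apply: ng; split => //=.
have : d * (e1 * g1) ^+ 2 = 0 by rewrite -onQ /edwards_form e00 g00 /=; ring.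
by move/eqP; rewrite mulf_eq0 (negbTE hd) sqrf_eq0 mulf_eq0 (negbTE ne1) => /eqP.
Qed.

Lemma tau_pi3'_rows_eq0 : d != 0 -> nz2 (e0, e1) -> nz2 (g0, g1) ->
  Defs.addA d P Q = [:: (0, 0); (0, 0)] -> tau_pi3' d U Z = (0, 0).
Proof.
move=> hd ne ng [A0 A1 B0 B1]; congr pair.
  apply: (lincomb2_eq0 (c := b1 * g0) (c' := - (b0 * g1)) B0 A0).
  by rewrite /tau_pi3' /=; ring.
have [e00 | ne0] := eqVneq e0 0; last first.
  apply: (mulIf ne0); rewrite mul0r.
  apply: (lincomb2_eq0 (c := b1 * e1 * g0) (c' := - (b0 * e1 * g1)) B1 A1).
  by rewrite /tau_pi3' /=; ring.
apply: (mulIf (edwards_e1g0_neq0 hd ne ng e00)); rewrite mul0r.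
move: A0 B0 onQ; rewrite e00 => A0 B0 onQ0.
apply: (lincomb3_eq0 (c := b1 * e1 * g0 * g1) (c' := - (b0 * e1 * g1 ^+ 2))
                     (c'' := - (a1 * b1 ^+ 2 * g0)) A0 B0 onQ0).
by rewrite /edwards_form /tau_pi3' /=; ring.
Qed.

Lemma pi1_tau {r s l n l'} : nz2 r -> is_sum d P Q (segre r s) ->
  nz2 (tau_pi1 d (scale4 l U) (scale2 n Z)) ->
  pi1_is (scale4 l' (segre s (g0, g1))) (tau_pi1 d (scale4 l U) (scale2 n Z)).
Proof.
rewrite tau_pi1_scale tau_pi1_addB => nr hR /nz2_scale2 nB.
by apply/pi1_is_segre/prop2_scale2r; apply: (is_sum_fac2 nr hR _ nB); left.
Qed.

Lemma pi3_tau {r s l n n'} : nz2 s -> is_sum d P Q (segre r s) ->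
  nz2 (tau_pi3 d (scale4 l U) (scale2 n Z)) ->
  pi3_is (scale2 n' (r.1 * e0, r.2 * e1)) (tau_pi3 d (scale4 l U) (scale2 n Z)).
Proof.
rewrite tau_pi3_scale => ns hR /nz2_scale2 nF; apply: prop2_scale2.
exact: (is_sum_prop2 (e := (e0, e1)) ns hR addA_tau_pi3 tau_pi3_rows_eq0 nF).
Qed.

Lemma pi3'_tau {r s l n n'} : d != 0 -> nz2 (e0, e1) -> nz2 (g0, g1) ->
  nz2 s -> is_sum d P Q (segre r s) ->
  nz2 (tau_pi3' d (scale4 l U) (scale2 n Z)) ->
  pi3_is (scale2 n' (r.1 * e0, r.2 * e1)) (tau_pi3' d (scale4 l U) (scale2 n Z)).
Proof.
rewrite tau_pi3'_scale => hd ne ng ns hR /nz2_scale2 nF; apply: prop2_scale2.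
exact: (is_sum_prop2 (e := (e0, e1)) ns hR addA_tau_pi3' (tau_pi3'_rows_eq0 hd ne ng) nF).
Qed.

End AdditionLawCertificates.

Theorem theorem6p2 (k : fieldType) (d : k) :
  (2%:R : k) != 0 -> d != 0 -> d != 1 ->
  forall (P Q R U U' : pt4 k) (Z Z' : k * k),
    onE d P -> onE d Q -> is_sum d P Q R ->
    kummer_img P Q U Z -> kummer_img R Q U' Z' ->
    let U0 := c0 U in let U1 := c1 U in let U2 := c2 U in let U3 := c3 U in
    let Z0 := Z.1 in let Z1 := Z.2 in
    (* pi_1 o tau *)
    (nz2 (U0 * Z0 - d * U3 * Z1, - U0 * Z1 + U3 * Z0) ->
       pi1_is U' (U0 * Z0 - d * U3 * Z1, - U0 * Z1 + U3 * Z0))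
    (* pi_2 o tau *)
    /\ (nz2 (U0, U2) -> pi2_is U' (U0, U2))
    /\ (nz2 (U1, U3) -> pi2_is U' (U1, U3))
    (* pi_3 o tau, first expression *)
    /\ (nz2 ((U0 ^+ 2 - d * U3 ^+ 2) * Z0,
             (U0 * U1 - U2 * U3) * Z0 + (U0 * U2 - d * U1 * U3) * Z1) ->
        pi3_is Z' ((U0 ^+ 2 - d * U3 ^+ 2) * Z0,
                   (U0 * U1 - U2 * U3) * Z0 + (U0 * U2 - d * U1 * U3) * Z1))
    (* pi_3 o tau, second expression *)
    /\ (nz2 (- (U0 * U2 - U1 * U3) * Z0 + (U0 * U1 - d * U2 * U3) * Z1,
             (U1 ^+ 2 - U2 ^+ 2) * Z1) ->
        pi3_is Z' (- (U0 * U2 - U1 * U3) * Z0 + (U0 * U1 - d * U2 * U3) * Z1,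
                   (U1 ^+ 2 - U2 ^+ 2) * Z1)).
Proof.
move=> _ hd _ P Q R U U' Z Z' hP hQ hR hPQ hRQ.
have [[a0 a1] [[b0 b1] [na nb eP]]] := onE_segre hP.
have [[e0 e1] [[g0 g1] [ne ng eQ]]] := onE_segre hQ.
have [[r0 r1] [[s0 s1] [nr ns eR]]] : exists r s, [/\ nz2 r, nz2 s & R = segre r s].
  by case: hR => onR _ _; apply: onE_segre onR.
subst P Q R.
have [[l ->] [n ->]] := kummer_img_segre na nb ne ng hPQ.
have [[l' ->] [n' ->]] := kummer_img_segre nr ns ne ng hRQ.
have onP := onE_edwards_form hP; have onQ := onE_edwards_form hQ.
split; first exact (pi1_tau nr hR).
split; first by move=> _; apply: pi2_is_segre; rewrite /prop2 /=; ring.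
split; first by move=> _; apply: pi2_is_segre; rewrite /prop2 /=; ring.
split; first exact (pi3_tau onP onQ ns hR).
exact (pi3'_tau onP onQ hd ne ng ns hR).
Qed.
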